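(* Let $\mathcal{L}_1,\mathcal{L}_2\in\mathrm{Mat}_d(\mathbb{Z})$ be irreducible and coprime with $|\det\mathcal{L}_1|=p$, $|\det\mathcal{L}_2|=q$. Let $\Lambda=\mathbb{Z}^d\cap \mathcal{L}_1^{-1}\mathcal{L}_2 \mathbb{Z}^d\cap \mathcal{L}_2^{-1}\mathcal{L}_1 \mathbb{Z}^d$ and $\Gamma_1=\Lambda\cap \mathcal{L}_2^{-1}\mathcal{L}_1\Lambda$. Then $\mathcal{L}_1$ and $\mathcal{L}_2$ induce well-defined group homomorphisms $$\phi_1,\phi_2:\mathbb{Z}^d/\Gamma_1\to \mathbb{Z}^d/\mathcal{L}_1\Lambda,\qquad \phi_i(x+\Gamma_1)=\mathcal{L}_ix+\mathcal{L}_1\Lambda,$$ of finite abelian groups, and $\phi_1+\phi_2$ is an isomorphism. (In particular $\Gamma_1$ has index $p^2q$ in $\mathbb{Z}^d$.)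
   Context: Irreducible: there are no non-trivial subspaces $U,V$ of $\mathbb{Q}^d$ of the same dimension with $\mathcal{L}_1U\subseteq V$ and $\mathcal{L}_2U\subseteq V$. Coprime: there are no $\mathcal{P},\mathcal{Q}\in \mathrm{GL}_d(\mathbb{Q})$ with $0<|\det(\mathcal{P})\det(\mathcal{Q})|<1$ such that $\mathcal{P}\mathcal{L}_1\mathcal{Q},\mathcal{P}\mathcal{L}_2\mathcal{Q}\in\mathrm{Mat}_d(\mathbb{Z})$. Under these hypotheses $\Lambda$ is a lattice of index $pq$ in $\mathbb{Z}^d$. *)

(* Vectors of Q^d are column vectors 'cV[rat]_d; Z^d is the
   set of those with integer entries. Subsets of Q^d are predicates. *)
From HB Require Import structures.
From mathcomp Require Import all_boot all_order all_algebra.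
Set Implicit Arguments. Unset Strict Implicit. Unset Printing Implicit Defensive.
Import Order.TTheory GRing.Theory Num.Theory.
Local Open Scope ring_scope.

Definition ratmx (m n : nat) (L : 'M[int]_(m, n)) : 'M[rat]_(m, n) :=
  map_mx (fun z : int => z%:~R) L.

Definition intmx (m n : nat) (A : 'M[rat]_(m, n)) : Prop :=
  forall i j, A i j \is a Num.int.

Definition Zd (d : nat) : 'cV[rat]_d -> Prop := fun v => intmx v.

Definition img (d : nat) (M : 'M[rat]_d) (S : 'cV[rat]_d -> Prop)
  : 'cV[rat]_d -> Prop := fun w => exists v, S v /\ w = M *m v.

Definition subsetQ (d : nat) (S T : 'cV[rat]_d -> Prop) : Prop :=
  forall v, S v -> T v.

(* Subspaces are represented as row spaces of
   matrices (mxalgebra); the image of a subspace spanned by rows u under the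
   column action v |-> L v is spanned by the rows u *m L^T. *)
Definition irreducible (d : nat) (L1 L2 : 'M[int]_d) : Prop :=
  ~ exists U V : 'M[rat]_d,
      [/\ \rank U = \rank V, (0 < \rank U)%N, (\rank U < d)%N,
          (U *m (ratmx L1)^T <= V)%MS & (U *m (ratmx L2)^T <= V)%MS].

Definition coprime_pair (d : nat) (L1 L2 : 'M[int]_d) : Prop :=
  ~ exists P Q : 'M[rat]_d,
      [/\ P \in unitmx, Q \in unitmx,
          0 < `|\det P * \det Q| < 1,
          intmx (P *m ratmx L1 *m Q) & intmx (P *m ratmx L2 *m Q)].

Definition Lambda (d : nat) (L1 L2 : 'M[int]_d) : 'cV[rat]_d -> Prop :=
  fun x => [/\ Zd x,
               img (invmx (ratmx L1) *m ratmx L2) (@Zd d) x &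
               img (invmx (ratmx L2) *m ratmx L1) (@Zd d) x].

Definition Gamma1 (d : nat) (L1 L2 : 'M[int]_d) : 'cV[rat]_d -> Prop :=
  fun x => Lambda L1 L2 x /\
           img (invmx (ratmx L2) *m ratmx L1) (Lambda L1 L2) x.

(* The subgroup S of Z^d has exactly n cosets in Z^d, i.e. Z^d/S is a
   (finite) group of order n: there are n pairwise incongruent
   representatives in Z^d covering all of Z^d modulo S. *)
Definition coset_count (d : nat) (S : 'cV[rat]_d -> Prop) (n : nat) : Prop :=
  exists r : 'I_n -> 'cV[rat]_d,
    [/\ forall i, Zd (r i),
        forall i j, S (r i - r j) -> i = j &
        forall x, Zd x -> exists i, S (x - r i)].

From HB Require Import structures.
From mathcomp Require Import all_boot all_order all_algebra zify.
From mathcomp Require Import boolp.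
Import Order.TTheory GRing.Theory Num.Theory.
Local Open Scope ring_scope.
Set Implicit Arguments. Unset Strict Implicit. Unset Printing Implicit Defensive.

(* Put A = L1^-1 L2.  Lambda and Gamma_1, like Y = Z^d ∩ A Z^d, are subgroups
   of Z^d containing a multiple of Z^d, so by the Smith normal form each is M Z^d
   for a square integral M, and its index in Z^d is |det M|.  Coprimality says:
   if L1 and L2 both map Q Z^d into L1 N Z^d then |det (L1 N)| <= |det Q|.
   Applied to Y inside Z^d (with L1 and L2 swapped), to Lambda inside Y and to
   Gamma_1 inside Lambda, it bounds their indices below by q, pq and p^2 q.
   Upper bounds come from injections of quotients: x |-> (L2 x, L1 x) embeds
   Z^d/Lambda into Z^d/L1 Z^d x Z^d/L2 Z^d, and L1 + L2 embeds Z^d/Gamma_1 into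
   Z^d/L1 Lambda, of order p (pq), because L1^-1 (L1 + L2) x = x + A x.
   Equal finite orders then make L1 + L2 bijective. *)

Section IntegralMatrices.
Variables m n k : nat.
Implicit Types (A B : 'M[rat]_(m, n)).

Lemma intmx0 : intmx (0 : 'M[rat]_(m, n)).
Proof. by move=> i j; rewrite mxE. Qed.

Lemma intmxD A B : intmx A -> intmx B -> intmx (A + B).
Proof. by move=> hA hB i j; rewrite mxE rpredD. Qed.

Lemma intmxB A B : intmx A -> intmx B -> intmx (A - B).
Proof. by move=> hA hB i j; rewrite !mxE rpredB. Qed.

Lemma intmxZ (c : rat) A : c \is a Num.int -> intmx A -> intmx (c *: A).
Proof. by move=> hc hA i j; rewrite mxE rpredM. Qed.

Lemma intmx_natZ (c : nat) A : intmx A -> intmx (c%:R *: A).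
Proof. by apply: intmxZ; apply: rpred_nat. Qed.

Lemma intmxM A (C : 'M[rat]_(n, k)) : intmx A -> intmx C -> intmx (A *m C).
Proof. by move=> hA hC i j; rewrite mxE rpred_sum // => l _; apply: rpredM. Qed.

Lemma intmx_ratmx (L : 'M[int]_(m, n)) : intmx (ratmx L).
Proof. by move=> i j; rewrite mxE intr_int. Qed.

Lemma intmxE A : intmx A -> A = ratmx (map_mx numq A).
Proof. by move=> hA; apply/matrixP => i j; rewrite !mxE numqK. Qed.

Lemma intmx_delta i0 j0 : intmx (delta_mx i0 j0 : 'M[rat]_(m, n)).
Proof. by move=> i j; rewrite mxE; case: (_ && _). Qed.

Lemma intmx_pid r : intmx (pid_mx r : 'M[rat]_(m, n)).
Proof. by move=> i j; rewrite mxE; case: (_ && _). Qed.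

Lemma ratmxM (L : 'M[int]_(m, n)) (L' : 'M[int]_(n, k)) :
  ratmx (L *m L') = ratmx L *m ratmx L'.
Proof. exact: map_mxM. Qed.

End IntegralMatrices.

Lemma intmx_mulmx_cV m n (A : 'M[rat]_(m, n)) :
  (forall v : 'cV[rat]_n, intmx v -> intmx (A *m v)) -> intmx A.
Proof.
move=> hA i j; have := hA _ (intmx_delta j 0) i 0.
by rewrite -colE mxE.
Qed.

Lemma det_ratmx n (L : 'M[int]_n) : \det (ratmx L) = (\det L)%:~R.
Proof. exact: det_map_mx. Qed.

Lemma unitmx_ratmx n (L : 'M[int]_n) : (ratmx L \in unitmx) = (\det L != 0).
Proof. by rewrite unitmxE det_ratmx unitfE intr_eq0. Qed.

Lemma intmx_normr_det_invmx n (N : 'M[rat]_n) : intmx N ->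
  intmx (`|\det N| *: invmx N).
Proof.
move=> hN; have [uN | nuN] := boolP (N \in unitmx); last first.
  move: nuN; rewrite unitmxE unitfE negbK => /eqP ->.
  by rewrite normr0 scale0r; apply: intmx0.
rewrite /invmx uN scalerA normrEsign -mulrA mulfV -?unitfE -?unitmxE // mulr1.
rewrite (intmxE hN) -map_mx_adj; apply: intmxZ; last exact: intmx_ratmx.
by rewrite rpredX ?rpredN.
Qed.

Definition unimodular n (U : 'M[rat]_n) :=
  [/\ intmx U, intmx (invmx U) & U \in unitmx].

Lemma unimodular_ratmx n (L : 'M[int]_n) : L \in unitmx -> unimodular (ratmx L).
Proof.
move=> uL; have LV1 : ratmx L *m ratmx (invmx L) = 1%:M.
  by rewrite -ratmxM mulmxV // /ratmx map_mx1.
have uRL : ratmx L \in unitmx by case/mulmx1_unit: LV1.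
split=> //; first exact: intmx_ratmx.
by rewrite -[invmx _]mulmx1 -LV1 mulKmx //; apply: intmx_ratmx.
Qed.

Lemma unimodular_normr_det n (U : 'M[rat]_n) : unimodular U -> `|\det U| = 1.
Proof.
case=> hU hV uU; rewrite (intmxE hU) det_ratmx -intr_norm.
have : \det (map_mx numq U *m map_mx numq (invmx U)) = 1.
  apply: (@intr_inj rat); rewrite -det_ratmx ratmxM -(intmxE hU) -(intmxE hV).
  by rewrite mulmxV // det1.
by move/eqP; rewrite det_mulmx mulrC => /eqP /intUnitRing.unitzPl /orP [] /eqP ->.
Qed.

Section Lattices.
Variable n : nat.
Implicit Types (S : 'cV[rat]_n -> Prop) (x y z : 'cV[rat]_n) (M N : 'M[rat]_n).

Definition is_subgroup S := S 0 /\ forall x y, S x -> S y -> S (x - y).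

Lemma subgroupN S x : is_subgroup S -> S x -> S (- x).
Proof. by case=> S0 SB Sx; rewrite -sub0r; apply: SB. Qed.

Lemma subgroupD S x y : is_subgroup S -> S x -> S y -> S (x + y).
Proof.
by move=> hS Sx Sy; rewrite -[y]opprK; apply: hS.2 => //; apply: subgroupN.
Qed.

Lemma subgroup_sub_trans S x y z :
  is_subgroup S -> S (x - z) -> S (y - z) -> S (x - y).
Proof. by case=> _ SB /SB h /h; rewrite opprB addrA subrK. Qed.

Lemma subgroupMz S x (c : int) : is_subgroup S -> S x -> S (c%:~R *: x).
Proof.
move=> hS Sx; have Snat (k : nat) : S (k%:R *: x).
  elim: k => [|k IH]; first by rewrite scale0r; case: hS.
  by rewrite mulrSr scalerDl scale1r; apply: subgroupD.
case: c => k; first exact: Snat.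
by rewrite NegzE intrN scaleNr; apply: subgroupN (Snat k.+1).
Qed.

Lemma subgroup_img S M : is_subgroup S -> is_subgroup (img M S).
Proof.
case=> S0 SB; split; first by exists 0; rewrite mulmx0.
move=> _ _ [u [Su ->]] [v [Sv ->]]; exists (u - v).
by rewrite mulmxBr; split; first apply: SB.
Qed.

Lemma img_unitP S M x : M \in unitmx -> img M S x <-> S (invmx M *m x).
Proof.
move=> uM; split; first by case=> v [Sv ->]; rewrite mulKmx.
by move=> Sx; exists (invmx M *m x); rewrite mulKVmx.
Qed.

Lemma img_linvP S M N x : N *m M = 1%:M -> img M S x <-> S (N *m x).
Proof.
move=> NM; split; first by case=> v [Sv ->]; rewrite mulmxA NM mul1mx.
by move=> Sx; exists (N *m x); rewrite mulmxA (mulmx1C NM) mul1mx.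
Qed.

Definition lattice k (G : 'M[rat]_(n, k)) x := exists u, intmx u /\ x = G *m u.

Lemma lattice_subgroup k (G : 'M[rat]_(n, k)) : is_subgroup (lattice G).
Proof.
split; first by exists 0; rewrite mulmx0; split; first apply: intmx0.
move=> _ _ [u [hu ->]] [v [hv ->]]; exists (u - v).
by rewrite mulmxBr; split; first apply: intmxB.
Qed.

Lemma lattice_mulmx k (G : 'M[rat]_(n, k)) u : intmx u -> lattice G (G *m u).
Proof. by exists u. Qed.

Lemma mulmx_sum_col k (G : 'M[rat]_(n, k)) u :
  G *m u = \sum_j u j 0 *: col j G.
Proof.
apply/matrixP => i l; rewrite (ord1 l) !mxE summxE; apply: eq_bigr => j _.
by rewrite !mxE mulrC.
Qed.

Lemma lattice_sub S k (G : 'M[rat]_(n, k)) x :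
  is_subgroup S -> (forall j, S (col j G)) -> lattice G x -> S x.
Proof.
move=> hS SG [u [hu ->]]; rewrite mulmx_sum_col.
apply: (big_ind S) => [|a b|j _]; first by case: hS.
  exact: subgroupD.
by have /intrP [c ->] := hu j 0; apply: subgroupMz.
Qed.

Lemma lattice_mulmx_rinv k l (G : 'M[rat]_(n, k)) (P : 'M[rat]_(k, l)) Q x :
  intmx P -> intmx Q -> P *m Q = 1%:M -> lattice (G *m P) x <-> lattice G x.
Proof.
move=> hP hQ PQ; split; case=> u [hu ->].
  by exists (P *m u); rewrite mulmxA; split; first apply: intmxM.
by exists (Q *m u); rewrite -mulmxA (mulmxA P) PQ mul1mx; split; first apply: intmxM.
Qed.

Lemma lattice_mull k M (G : 'M[rat]_(n, k)) x :
  M \in unitmx -> lattice (M *m G) x <-> lattice G (invmx M *m x).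
Proof.
move=> uM; split; case=> u [hu e]; exists u; split=> //.
  by rewrite e -mulmxA mulKmx.
by rewrite -mulmxA -e mulKVmx.
Qed.

Lemma latticeP M x : M \in unitmx -> lattice M x <-> intmx (invmx M *m x).
Proof. exact: img_unitP. Qed.

Lemma lattice1 x : lattice 1%:M x <-> intmx x.
Proof. by rewrite latticeP ?unitmx1 // invmx1 mul1mx. Qed.

Lemma intmx_lattice_incl M N : N \in unitmx ->
  (forall v, intmx v -> lattice N (M *m v)) -> intmx (invmx N *m M).
Proof.
move=> uN h; apply: intmx_mulmx_cV => v hv.
by rewrite -mulmxA -latticeP //; apply: h.
Qed.

End Lattices.

Section CosetCounting.
Variable n : nat.
Implicit Types (S T : 'cV[rat]_n -> Prop) (F : 'M[rat]_n).

Lemma coset_count_ext S T m :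
  (forall x, S x <-> T x) -> coset_count S m -> coset_count T m.
Proof.
move=> eST [r [hr dr cr]]; exists r; split=> // [i j /eST|x /cr [i /eST]].
  exact: dr.
by exists i.
Qed.

Lemma coset_count_classes S m k (v : 'I_k -> 'cV[rat]_n) :
  is_subgroup S -> coset_count S m -> (forall i, Zd (v i)) ->
  exists f : 'I_k -> 'I_m, forall i j, f i = f j -> S (v i - v j).
Proof.
move=> hS [r [_ _ cr]] hv; have [f hf] := fin_all_exists (fun i => cr _ (hv i)).
by exists f => i j e; apply: (subgroup_sub_trans hS (hf i)); rewrite e.
Qed.

Lemma coset_count_leq S m k (v : 'I_k -> 'cV[rat]_n) :
  is_subgroup S -> coset_count S m -> (forall i, Zd (v i)) ->
  (forall i j, S (v i - v j) -> i = j) -> (k <= m)%N.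
Proof.
move=> hS cS hv dv; have [f hf] := coset_count_classes hS cS hv.
by rewrite -[k]card_ord -[m]card_ord; apply: (leq_card f) => i j /hf /dv.
Qed.

Lemma coset_count_cover S m (v : 'I_m -> 'cV[rat]_n) :
  is_subgroup S -> coset_count S m -> (forall i, Zd (v i)) ->
  (forall i j, S (v i - v j) -> i = j) ->
  forall x, Zd x -> exists i, S (x - v i).
Proof.
move=> hS [r [_ _ cr]] hv dv x hx.
have [f hf] := fin_all_exists (fun i => cr _ (hv i)).
have /injF_bij [g fK gK] : injective f.
  by move=> i j e; apply: dv; apply: (subgroup_sub_trans hS (hf i)); rewrite e.
have [j hj] := cr x hx; exists (g j); apply: (subgroup_sub_trans hS hj).
by have := hf (g j); rewrite gK.
Qed.

Lemma coset_count_leq_hom S T m m' F :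
  is_subgroup T -> coset_count S m -> coset_count T m' -> intmx F ->
  (forall x, Zd x -> T (F *m x) -> S x) -> (m <= m')%N.
Proof.
move=> hT [r [hr dr _]] cT hF FS.
apply: (coset_count_leq (v := fun i => F *m r i) hT cT) => [i|i j].
  exact: intmxM hF (hr i).
by rewrite -mulmxBr => /(FS _ (intmxB (hr i) (hr j))) /dr.
Qed.

Lemma coset_count_leq_hom2 S T1 T2 m m1 m2 F1 F2 :
  is_subgroup T1 -> is_subgroup T2 ->
  coset_count S m -> coset_count T1 m1 -> coset_count T2 m2 ->
  intmx F1 -> intmx F2 ->
  (forall x, Zd x -> T1 (F1 *m x) -> T2 (F2 *m x) -> S x) -> (m <= m1 * m2)%N.
Proof.
move=> hT1 hT2 [r [hr dr _]] cT1 cT2 hF1 hF2 FS.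
have [f1 hf1] := coset_count_classes (v := fun i => F1 *m r i) hT1 cT1
  (fun i => intmxM hF1 (hr i)).
have [f2 hf2] := coset_count_classes (v := fun i => F2 *m r i) hT2 cT2
  (fun i => intmxM hF2 (hr i)).
rewrite -[m]card_ord -[m1]card_ord -[m2]card_ord -card_prod.
apply: (leq_card (fun i => (f1 i, f2 i))) => i j [/hf1 h1 /hf2 h2].
by apply: dr; apply: (FS _ (intmxB (hr i) (hr j))); rewrite mulmxBr.
Qed.

End CosetCounting.

Lemma absz_modz_lt (z c : int) : c != 0 -> (`|(z %% c)%Z| < `|c|)%N.
Proof. by move=> c0; have := ltz_mod z c0; have := modz_ge0 z c0; lia. Qed.

Lemma small_congr_eq (a b : nat) (c z : int) :
  (a < `|c|)%N -> (b < `|c|)%N -> a%:Z - b%:Z = c * z -> a = b.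
Proof.
move=> ha hb e; have [z0|nz] := eqVneq z 0.
  by move: e; rewrite z0 mulr0 => /eqP; rewrite subr_eq0 eqz_nat => /eqP.
have := congr1 absz e; rewrite abszM; have : (0 < `|z|)%N by rewrite absz_gt0.
nia.
Qed.

Definition diagz n (D : 'I_n -> int) : 'M[rat]_n := diag_mx (\row_i (D i)%:~R).

Lemma intmx_diagz n (D : 'I_n -> int) : intmx (diagz D).
Proof. by move=> i j; rewrite !mxE rpredMn // intr_int. Qed.

Lemma diagz_mulmx n k (D : 'I_n -> int) (A : 'M[rat]_(n, k)) i j :
  (diagz D *m A) i j = (D i)%:~R * A i j.
Proof. by rewrite mul_diag_mx !mxE. Qed.

Lemma det_diagz n (D : 'I_n -> int) : \det (diagz D) = (\prod_i D i)%:~R.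
Proof. by rewrite det_diag rmorph_prod; apply: eq_bigr => i _; rewrite mxE. Qed.

Section DiagonalLattice.
Variables (n : nat) (D : 'I_n -> int).
Hypothesis D_neq0 : forall i, D i != 0.

Definition residue := {dffun forall i : 'I_n, 'I_`|D i|}.

Definition residue_col (t : residue) : 'cV[rat]_n := \col_i (t i : nat)%:R.

Lemma residue_col_int t : Zd (residue_col t).
Proof. by move=> i j; rewrite mxE rpred_nat. Qed.

Lemma residue_exists x : Zd x -> exists t, lattice (diagz D) (x - residue_col t).
Proof.
move=> hx; pose z i := numq (x i 0).
have ez i : x i 0 = (z i)%:~R by rewrite numqK //; apply: hx.
exists (finfun (fun i => Ordinal (absz_modz_lt (z i) (D_neq0 i)))).
exists (\col_i ((z i %/ D i)%Z)%:~R).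
split; first by move=> i j; rewrite mxE intr_int.
apply/matrixP => i j; rewrite (ord1 j) diagz_mulmx !mxE ffunE /= ez.
rewrite natr_absz ger0_norm ?modz_ge0 // {1}(divz_eq (z i) (D i)).
by rewrite intrD addrK intrM mulrC.
Qed.

Lemma residue_col_inj t t' :
  lattice (diagz D) (residue_col t - residue_col t') -> t = t'.
Proof.
case=> u [hu e]; apply/ffunP => i; apply: val_inj.
have /intrP [c ec] := hu i 0.
have /= := congr1 (fun y : 'cV[rat]_n => y i 0) e; rewrite diagz_mulmx ec !mxE.
rewrite -intrM !pmulrn -intrB.
by move/intr_inj; apply: small_congr_eq.
Qed.

Lemma coset_count_diagz : coset_count (lattice (diagz D)) #|{: residue}|.
Proof.
exists (fun k => residue_col (enum_val k)); split.
- by move=> k; apply: residue_col_int.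
- by move=> k k' /residue_col_inj /enum_val_inj.
- by move=> x /residue_exists [t ht]; exists (enum_rank t); rewrite enum_rankK.
Qed.

Lemma card_residue : #|{: residue}| = (\prod_i `|D i|)%N.
Proof.
rewrite card_dep_ffun foldrE big_map big_enum.
by apply: eq_bigr => i _; rewrite card_ord.
Qed.

End DiagonalLattice.

Lemma smith_rat m k (G : 'M[rat]_(m, k)) : intmx G ->
  exists U V (D : 'I_m -> int),
    [/\ unimodular U, unimodular V & G = U *m (diagz D *m pid_mx m) *m V].
Proof.
move=> hG; have [L uL [R uR [s _ eGs]]] := int_Smith_normal_form (map_mx numq G).
exists (ratmx L), (ratmx R), (fun i => s`_i).
split; [exact: unimodular_ratmx | exact: unimodular_ratmx |].
rewrite (intmxE hG) eGs !ratmxM; congr (_ *m _ *m _).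
apply/matrixP => i j; rewrite diagz_mulmx !mxE ltn_ord andbT.
by case: (_ == _); rewrite ?mulr1n ?mulr0n ?mulr1 ?mulr0.
Qed.

Lemma lattice_mulmx_unimodular n k (G : 'M[rat]_(n, k)) V x :
  unimodular V -> lattice (G *m V) x <-> lattice G x.
Proof.
by case=> hV hV' uV; apply: lattice_mulmx_rinv hV hV' _; rewrite mulmxV.
Qed.

Lemma lattice_mulmx_pid n k (M : 'M[rat]_n) x : (n <= k)%N ->
  lattice (M *m (pid_mx n : 'M_(n, k))) x <-> lattice M x.
Proof.
move=> nk; have PP : (pid_mx n : 'M[rat]_(n, k)) *m (pid_mx n : 'M_(k, n)) = 1%:M.
  by rewrite pid_mx_id // pid_mx_1.
by apply: lattice_mulmx_rinv PP; apply: intmx_pid.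
Qed.

Lemma coset_count_unimodular_mull n k U (G : 'M[rat]_(n, k)) c :
  unimodular U -> coset_count (lattice G) c -> coset_count (lattice (U *m G)) c.
Proof.
case=> hU hU' uU [r [hr dr cr]]; exists (fun i => U *m r i); split.
- by move=> i; exact: intmxM hU (hr i).
- by move=> i j /(lattice_mull _ _ uU); rewrite mulmxBr !mulKmx //; apply: dr.
- move=> x hx; have [i hi] := cr _ (intmxM hU' hx).
  by exists i; apply/(lattice_mull _ _ uU); rewrite mulmxBr mulKmx.
Qed.

Lemma coset_count_lattice n (M : 'M[rat]_n) : intmx M -> M \in unitmx ->
  exists c : nat, coset_count (lattice M) c /\ c%:R = `|\det M|.
Proof.
move=> hM uM; have [U [V [D [uU uV eM]]]] := smith_rat hM.
rewrite pid_mx_1 mulmx1 in eM.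
have detM : `|\det M| = `|(\prod_i D i)%:~R|.
  by rewrite eM !det_mulmx !normrM det_diagz !unimodular_normr_det // mul1r mulr1.
have D_neq0 i : D i != 0.
  apply: contraTneq uM => Di0; rewrite unitmxE unitfE -normr_eq0 detM.
  by rewrite (bigD1 i) //= Di0 mul0r normr0.
exists #|{: residue D}|; split.
  apply: (coset_count_ext (S := lattice (U *m diagz D))).
    by move=> x; rewrite eM -(lattice_mulmx_unimodular _ _ uV).
  exact: coset_count_unimodular_mull (coset_count_diagz D_neq0).
rewrite detM card_residue !rmorph_prod normr_prod.
by apply: eq_bigr => i _; rewrite /= natr_absz intr_norm.
Qed.

Definition sublattice n (S : 'cV[rat]_n -> Prop) (m : nat) :=
  [/\ is_subgroup S, forall x, S x -> Zd x & forall v, Zd v -> S (m%:R *: v)].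

Definition lattice_basis n (S : 'cV[rat]_n -> Prop) (M : 'M[rat]_n) :=
  [/\ intmx M, M \in unitmx & forall x, S x <-> lattice M x].

Definition gen_mx n (gs : seq 'cV[rat]_n) : 'M[rat]_(n, size gs) :=
  \matrix_(i, j) gs`_j i 0.

Lemma col_gen_mx n (gs : seq 'cV[rat]_n) j : col j (gen_mx gs) = gs`_j.
Proof. by apply/colP => i; rewrite !mxE. Qed.

Lemma lattice_gen_mx n (gs : seq 'cV[rat]_n) g :
  g \in gs -> lattice (gen_mx gs) g.
Proof.
rewrite -index_mem => gs_g; exists (delta_mx (Ordinal gs_g) 0).
by split; [apply: intmx_delta | rewrite -colE col_gen_mx nth_index // -index_mem].
Qed.

Lemma lattice_diagz_const n (m : nat) x :
  lattice (diagz (fun _ : 'I_n => m%:Z)) x -> exists u, Zd u /\ x = m%:R *: u.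
Proof.
case=> u [hu ->]; exists u; split=> //.
have -> : diagz (fun _ : 'I_n => m%:Z) = diag_mx (const_mx m%:R).
  by apply/matrixP => i j; rewrite !mxE.
by rewrite diag_const_mx mul_scalar_mx.
Qed.

Lemma sublattice_gen n (S : 'cV[rat]_n -> Prop) m :
  (0 < m)%N -> sublattice S m -> exists k (G : 'M[rat]_(n, k)),
    [/\ (n <= k)%N, intmx G & forall x, S x <-> lattice G x].
Proof.
move=> m_gt0 [hS SZ Sm]; pose D (_ : 'I_n) := m%:Z.
have D_neq0 i : D i != 0 by rewrite eqz_nat -lt0n.
have SD y : lattice (diagz D) y -> S y.
  by case/lattice_diagz_const => u [hu ->]; apply: Sm.
pose gs := [seq col i (diagz D) | i <- enum 'I_n] ++
           [seq residue_col t | t <- enum {: residue D} & `[< S (residue_col t) >]].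
have gsS g : g \in gs -> S g.
  rewrite mem_cat => /orP [] /mapP [] => [i _ ->|t].
    by apply: SD; rewrite colE; apply: lattice_mulmx; apply: intmx_delta.
  by rewrite mem_filter => /andP [/asboolP St _] ->.
have Ggs x : lattice (diagz D) x -> lattice (gen_mx gs) x.
  apply: lattice_sub; first exact: lattice_subgroup.
  by move=> i; apply: lattice_gen_mx; rewrite mem_cat (map_f _ (mem_enum _ i)).
exists (size gs), (gen_mx gs); split.
- by rewrite size_cat size_map size_enum_ord leq_addr.
- by move=> i j; rewrite mxE; apply: SZ; apply: gsS; rewrite mem_nth.
move=> x; split=> [Sx | ]; last first.
  by apply: lattice_sub => // j; rewrite col_gen_mx; apply: gsS; rewrite mem_nth.
have [t ht] := residue_exists D_neq0 (SZ _ Sx).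
have St : S (residue_col t).
  by rewrite -[residue_col t](subKr x); apply: hS.2 _ _ Sx (SD _ ht).
rewrite -(subrK (residue_col t) x).
apply: subgroupD; [exact: lattice_subgroup | exact: Ggs |].
apply: lattice_gen_mx; rewrite mem_cat; apply/orP; right.
by apply: map_f; rewrite mem_filter mem_enum andbT; apply/asboolP.
Qed.

Lemma lattice_square n k (G : 'M[rat]_(n, k)) : (n <= k)%N -> intmx G ->
  exists M : 'M[rat]_n, intmx M /\ forall x, lattice G x <-> lattice M x.
Proof.
move=> nk hG; have [U [V [D [uU uV ->]]]] := smith_rat hG.
exists (U *m diagz D); split.
  by case: uU => hU _ _; apply: intmxM => //; apply: intmx_diagz.
by move=> x; rewrite lattice_mulmx_unimodular // mulmxA lattice_mulmx_pid.
Qed.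

Lemma lattice_unit n m (M : 'M[rat]_n) : (0 < m)%N ->
  (forall v, Zd v -> lattice M (m%:R *: v)) -> M \in unitmx.
Proof.
move=> m_gt0 hM; pose e i : 'cV[rat]_n := delta_mx i 0.
have ex_w i : exists u, m%:R *: e i = M *m u.
  by have [u [_ eu]] := hM _ (intmx_delta i 0); exists u.
have [w hw] := fin_all_exists ex_w.
have MW : M *m \matrix_(a, b) w b a 0 = m%:R *: 1%:M.
  apply/matrixP => a b; have := congr1 (fun X : 'cV_n => X a 0) (hw b).
  by rewrite !mxE eqxx andbT => ->; apply: eq_bigr => c _; rewrite mxE.
rewrite unitmxE unitfE; apply/eqP => det0; move: (congr1 determinant MW).
rewrite det_mulmx det0 mul0r detZ det1 mulr1 => /esym /eqP.
by rewrite expf_eq0 pnatr_eq0 eqn0Ngt m_gt0 andbF.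
Qed.

Lemma sublattice_basis n (S : 'cV[rat]_n -> Prop) m :
  (0 < m)%N -> sublattice S m -> exists M, lattice_basis S M.
Proof.
move=> m_gt0 hS; have [k [G [nk hG eSG]]] := sublattice_gen m_gt0 hS.
have [M [hM eGM]] := lattice_square nk hG.
have eSM x : S x <-> lattice M x by rewrite eSG eGM.
exists M; split=> //; apply: (lattice_unit m_gt0) => v hv.
by case: hS => _ _ Sm; apply/eSM/Sm.
Qed.

Lemma coset_count_basis n (S : 'cV[rat]_n -> Prop) M : lattice_basis S M ->
  exists c : nat, coset_count S c /\ c%:R = `|\det M|.
Proof.
case=> hM uM eSM; have [c [cM ec]] := coset_count_lattice hM uM.
by exists c; split=> //; apply: coset_count_ext cM => x; rewrite eSM.
Qed.

Lemma lattice_basis_img n (S : 'cV[rat]_n -> Prop) M R :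
  intmx R -> R \in unitmx -> lattice_basis S M ->
  lattice_basis (img R S) (R *m M).
Proof.
move=> hR uR [hM uM eSM]; split; [exact: intmxM | by rewrite unitmx_mul uR |].
by move=> x; rewrite img_unitP // eSM lattice_mull.
Qed.

Lemma coset_count_ratmx n (L : 'M[int]_n) :
  \det L != 0 -> coset_count (lattice (ratmx L)) `|\det L|%N.
Proof.
move=> L_neq0; have uL : ratmx L \in unitmx by rewrite unitmx_ratmx.
have [c [cL ec]] := coset_count_lattice (intmx_ratmx L) uL.
suff -> : `|\det L|%N = c by [].
by apply/eqP; rewrite -(eqr_nat rat) ec det_ratmx natr_absz intr_norm.
Qed.

Lemma coprime_pairC d (L1 L2 : 'M[int]_d) : coprime_pair L1 L2 -> coprime_pair L2 L1.
Proof. by move=> cop [P [Q [uP uQ hPQ h2 h1]]]; apply: cop; exists P, Q. Qed.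

Lemma coprime_det_le d (L1 L2 : 'M[int]_d) (N Q : 'M[rat]_d) :
  coprime_pair L1 L2 -> \det L1 != 0 -> N \in unitmx -> Q \in unitmx ->
  (forall x, lattice Q x ->
     lattice N x /\ lattice N (invmx (ratmx L1) *m ratmx L2 *m x)) ->
  `|\det (ratmx L1)| * `|\det N| <= `|\det Q|.
Proof.
move=> cop L1_neq0 uN uQ hQN; set R1 := ratmx L1.
have uR1 : R1 \in unitmx by rewrite unitmx_ratmx.
have det_gt0 (M : 'M[rat]_d) : M \in unitmx -> 0 < `|\det M|.
  by rewrite normr_gt0 unitmxE unitfE.
rewrite leNgt; apply/negP => lt_QN; apply: cop.
exists (invmx N *m invmx R1), Q; split=> //.
- by rewrite unitmx_mul !unitmx_inv uN.
- have a_gt0 : 0 < `|\det R1| * `|\det N| by rewrite mulr_gt0 ?det_gt0.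
  rewrite det_mulmx !det_inv -invfM normrM normfV normrM mulrC (mulrC `|\det N|).
  by rewrite (ltr_pdivrMr _ _ a_gt0) mul1r lt_QN andbT divr_gt0 ?det_gt0.
- rewrite -(mulmxA (invmx N)) mulVmx // mulmx1.
  by apply: intmx_lattice_incl => // v hv; apply: (hQN _ (lattice_mulmx _ hv)).1.
- rewrite -!mulmxA (mulmxA (invmx R1)); apply: intmx_lattice_incl => // v hv.
  by have := (hQN _ (lattice_mulmx _ hv)).2; rewrite !mulmxA.
Qed.

Section Lemma43.
Variables (d p q : nat) (L1 L2 : 'M[int]_d).
Hypotheses (L1_neq0 : \det L1 != 0) (L2_neq0 : \det L2 != 0)
  (cop : coprime_pair L1 L2)
  (detL1 : `|\det L1| = p%:Z) (detL2 : `|\det L2| = q%:Z).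

Let R1 := ratmx L1.
Let R2 := ratmx L2.
Let A := invmx R1 *m R2.
Let B := invmx R2 *m R1.
Let Lam := Lambda L1 L2.
Let Gam := Gamma1 L1 L2.

Let unitR1 : R1 \in unitmx.
Proof. by rewrite unitmx_ratmx. Qed.

Let unitR2 : R2 \in unitmx.
Proof. by rewrite unitmx_ratmx. Qed.

Let normr_detR1 : `|\det R1| = p%:R.
Proof. by rewrite det_ratmx -intr_norm detL1. Qed.

Let normr_detR2 : `|\det R2| = q%:R.
Proof. by rewrite det_ratmx -intr_norm detL2. Qed.

Let absz_detL1 : `|\det L1|%N = p.
Proof. by apply/eqP; rewrite -eqz_nat abszE detL1. Qed.

Let absz_detL2 : `|\det L2|%N = q.
Proof. by apply/eqP; rewrite -eqz_nat abszE detL2. Qed.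

Let p_gt0 : (0 < p)%N.
Proof. by rewrite lt0n -absz_detL1 absz_eq0. Qed.

Let q_gt0 : (0 < q)%N.
Proof. by rewrite lt0n -absz_detL2 absz_eq0. Qed.

Let mulBA : B *m A = 1%:M.
Proof. by rewrite -mulmxA (mulmxA R1) mulmxV // mul1mx mulVmx. Qed.

Let mulAB : A *m B = 1%:M.
Proof. exact: mulmx1C mulBA. Qed.

Lemma LambdaP x : Lam x <-> [/\ Zd x, Zd (B *m x) & Zd (A *m x)].
Proof.
rewrite /Lam /Lambda -/R1 -/R2 -/A -/B.
split=> [[hx /(img_linvP _ _ mulBA) hB /(img_linvP _ _ mulAB) hA] | [hx hB hA]] //.
by split=> //; [apply/(img_linvP _ _ mulBA) | apply/(img_linvP _ _ mulAB)].
Qed.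

Lemma Gamma1P x : Gam x <-> Lam x /\ Lam (A *m x).
Proof.
rewrite /Gam /Gamma1 -/R1 -/R2 -/B -/Lam.
split=> [[hx /(img_linvP _ _ mulAB)] | [hx hA]] //.
by split=> //; apply/(img_linvP _ _ mulAB).
Qed.

Lemma L1LambdaP y : img R1 Lam y <-> Lam (invmx R1 *m y).
Proof. exact: img_unitP. Qed.

Let intmx_pA : intmx (p%:R *: A).
Proof.
rewrite -normr_detR1 scalemxAl; apply: intmxM; last exact: intmx_ratmx.
by apply: intmx_normr_det_invmx; apply: intmx_ratmx.
Qed.

Let intmx_qB : intmx (q%:R *: B).
Proof.
rewrite -normr_detR2 scalemxAl; apply: intmxM; last exact: intmx_ratmx.
by apply: intmx_normr_det_invmx; apply: intmx_ratmx.
Qed.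

(* [Y] is Z^d ∩ A Z^d, since A B = 1. *)
Let Y x := Zd x /\ Zd (B *m x).

Lemma sublattice_Y : sublattice Y q.
Proof.
split.
- split; first by split; rewrite ?mulmx0; apply: intmx0.
  by move=> x y [hx hBx] [hy hBy]; split; rewrite ?mulmxBr; apply: intmxB.
- by move=> x [].
- move=> v hv; split; first exact: intmx_natZ.
  by rewrite -scalemxAr scalemxAl; apply: intmxM intmx_qB hv.
Qed.

Lemma sublattice_Lambda : sublattice Lam (p * q).
Proof.
split.
- split; first by apply/LambdaP; split; rewrite ?mulmx0; apply: intmx0.
  move=> x y /LambdaP [hx hBx hAx] /LambdaP [hy hBy hAy].
  by apply/LambdaP; split; rewrite ?mulmxBr; apply: intmxB.
- by move=> x /LambdaP [].
- move=> v hv; apply/LambdaP; split; first exact: intmx_natZ.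
  + rewrite natrM -scalerA -!scalemxAr scalemxAl.
    by apply: intmx_natZ; apply: intmxM intmx_qB hv.
  + rewrite natrM mulrC -scalerA -!scalemxAr scalemxAl.
    by apply: intmx_natZ; apply: intmxM intmx_pA hv.
Qed.

Lemma sublattice_Gamma1 : sublattice Gam (p ^ 2 * q).
Proof.
have [[Lam0 LamB] LamZ Lam_mul] := sublattice_Lambda.
have e v : (p ^ 2 * q)%:R *: v = (p * q)%:R *: (p%:R *: v).
  by rewrite scalerA -natrM mulnAC mulnn.
split.
- split; first by apply/Gamma1P; rewrite mulmx0.
  move=> x y /Gamma1P [hx hAx] /Gamma1P [hy hAy].
  by apply/Gamma1P; rewrite mulmxBr; split; apply: LamB.
- by move=> x /Gamma1P [/LamZ].
- move=> v hv; apply/Gamma1P; rewrite e; split.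
    by apply: Lam_mul; apply: intmx_natZ.
  by rewrite -!scalemxAr scalemxAl; apply: Lam_mul; apply: intmxM intmx_pA hv.
Qed.

Lemma det_basis_Y_ge CY : lattice_basis Y CY -> q%:R <= `|\det CY|.
Proof.
case=> _ uCY eY; rewrite -normr_detR2 -[X in X <= _]mulr1 -normr1 -(det1 rat d).
apply: (coprime_det_le (coprime_pairC cop)) => // [|x /eY [hx hBx]].
  exact: unitmx1.
by rewrite !lattice1.
Qed.

Lemma det_basis_Lambda_ge CL : lattice_basis Lam CL -> (p * q)%:R <= `|\det CL|.
Proof.
case=> _ uCL eL; have [CY bY] := sublattice_basis q_gt0 sublattice_Y.
have [_ uCY eY] := bY.
apply: le_trans (coprime_det_le cop L1_neq0 uCY uCL _).
  by rewrite natrM -/R1 normr_detR1 ler_pM2l ?ltr0n // det_basis_Y_ge.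
move=> x /eL /LambdaP [hx hBx hAx]; rewrite -/R1 -/R2 -/A -!eY.
by split; split=> //; rewrite mulmxA mulBA mul1mx.
Qed.

Lemma coset_count_Lambda_le c : coset_count Lam c -> (c <= p * q)%N.
Proof.
move=> cL; rewrite -absz_detL1 -absz_detL2.
apply: (coset_count_leq_hom2 (lattice_subgroup R1) (lattice_subgroup R2) cL
  (coset_count_ratmx L1_neq0) (coset_count_ratmx L2_neq0)
  (intmx_ratmx L2) (intmx_ratmx L1)).
move=> x hx /(latticeP _ unitR1) hAx /(latticeP _ unitR2) hBx.
by rewrite !mulmxA in hAx hBx; apply/LambdaP.
Qed.

Lemma det_basis_Lambda CL : lattice_basis Lam CL -> `|\det CL| = (p * q)%:R.
Proof.
move=> bL; have [c [cL ec]] := coset_count_basis bL.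
apply/eqP; rewrite eq_le det_basis_Lambda_ge // andbT -ec ler_nat.
exact: coset_count_Lambda_le.
Qed.

Let pq_gt0 : (0 < p * q)%N.
Proof. by rewrite muln_gt0 p_gt0 q_gt0. Qed.

Lemma subgroup_L1Lambda : is_subgroup (img R1 Lam).
Proof. by apply: subgroup_img; case: sublattice_Lambda. Qed.

Lemma L1Lambda_int y : img R1 Lam y -> Zd y.
Proof. by case=> v [/LambdaP [hv _ _] ->]; apply: intmxM (intmx_ratmx L1) hv. Qed.

Lemma coset_count_L1Lambda : coset_count (img R1 Lam) (p ^ 2 * q).
Proof.
have [CL bL] := sublattice_basis pq_gt0 sublattice_Lambda.
have bL1L := lattice_basis_img (intmx_ratmx L1) unitR1 bL.
have [c [cL ec]] := coset_count_basis bL1L.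
suff <- : c = (p ^ 2 * q)%N by [].
apply/eqP; rewrite -(eqr_nat rat) ec det_mulmx normrM normr_detR1.
by rewrite (det_basis_Lambda bL) -natrM mulnA mulnn.
Qed.

Lemma det_basis_Gamma1_ge CG :
  lattice_basis Gam CG -> (p ^ 2 * q)%:R <= `|\det CG|.
Proof.
case=> _ uCG eG; have [CL bL] := sublattice_basis pq_gt0 sublattice_Lambda.
have [_ uCL eL] := bL.
have := coprime_det_le cop L1_neq0 uCL uCG.
rewrite -/R1 normr_detR1 (det_basis_Lambda bL) -natrM mulnA mulnn; apply.
by move=> x /eG /Gamma1P [hx hAx]; rewrite -/R1 -/R2 -/A -!eL.
Qed.

Lemma sum_phi_kernel x : Zd x -> img R1 Lam ((R1 + R2) *m x) -> Gam x.
Proof.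
have Zd_subr u v : Zd (u + v) -> Zd u -> Zd v.
  by move=> huv hu; rewrite -(addKr u v) addrC; apply: intmxB.
move=> hx /L1LambdaP; rewrite mulmxDl mulmxDr !mulmxA mulVmx // mul1mx -/A.
case/LambdaP => /Zd_subr /(_ hx) hAx; rewrite !mulmxDr mulmxA mulBA mul1mx.
rewrite addrC => /Zd_subr /(_ hx) hBx /Zd_subr /(_ hAx) hAAx.
apply/Gamma1P; split; apply/LambdaP; split=> //.
by rewrite mulmxA mulBA mul1mx.
Qed.

Lemma coset_count_Gamma1 : coset_count Gam (p ^ 2 * q).
Proof.
have p2q_gt0 : (0 < p ^ 2 * q)%N by rewrite muln_gt0 expn_gt0 p_gt0 q_gt0.
have [CG bG] := sublattice_basis p2q_gt0 sublattice_Gamma1.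
have [c [cG ec]] := coset_count_basis bG.
suff -> : (p ^ 2 * q)%N = c by [].
apply/eqP; rewrite eqn_leq -(ler_nat rat) ec det_basis_Gamma1_ge //=.
have := coset_count_leq_hom subgroup_L1Lambda cG coset_count_L1Lambda _ sum_phi_kernel.
by apply; apply: intmxD; apply: intmx_ratmx.
Qed.

Lemma sum_phi_surj y :
  Zd y -> exists x, Zd x /\ img R1 Lam ((R1 + R2) *m x - y).
Proof.
move=> hy; have [r [hr dr _]] := coset_count_Gamma1.
have hF : intmx (R1 + R2) by apply: intmxD; apply: intmx_ratmx.
have [|i hi] := coset_count_cover (v := fun i => (R1 + R2) *m r i)
  subgroup_L1Lambda coset_count_L1Lambda (fun i => intmxM hF (hr i)) _ hy.
  move=> i j; rewrite -mulmxBr.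
  by move=> /(sum_phi_kernel (intmxB (hr i) (hr j))) /dr.
by exists (r i); split=> //; rewrite -opprB; apply: subgroupN subgroup_L1Lambda hi.
Qed.

Lemma phi_well_defined x :
  Gam x -> img R1 Lam (R1 *m x) /\ img R1 Lam (R2 *m x).
Proof.
by case/Gamma1P => hx hAx; split; apply/L1LambdaP; rewrite mulmxA ?mulVmx ?mul1mx.
Qed.

End Lemma43.

Theorem lemma4p3 (d p q : nat) (L1 L2 : 'M[int]_d) :
  \det L1 != 0 -> \det L2 != 0 ->
  irreducible L1 L2 -> coprime_pair L1 L2 ->
  `|\det L1| = p%:Z -> `|\det L2| = q%:Z ->
  let L1Lam := img (ratmx L1) (Lambda L1 L2) in
  let G1 := Gamma1 L1 L2 in
      subsetQ L1Lam (@Zd d) /\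
      (forall x, G1 x -> L1Lam (ratmx L1 *m x) /\ L1Lam (ratmx L2 *m x)) /\
      ((exists n, coset_count G1 n) /\ (exists n, coset_count L1Lam n)) /\
      (forall x, Zd x -> L1Lam ((ratmx L1 + ratmx L2) *m x) -> G1 x) /\
      (forall y, Zd y -> exists x, Zd x /\
                   L1Lam ((ratmx L1 + ratmx L2) *m x - y)) /\
      coset_count G1 (p ^ 2 * q)%N.
Proof.
move=> L1_neq0 L2_neq0 _ cop detL1 detL2 L1Lam G1.
have cG1 := coset_count_Gamma1 L1_neq0 L2_neq0 cop detL1 detL2.
have cL1Lam := coset_count_L1Lambda L1_neq0 L2_neq0 cop detL1 detL2.
split; first by move=> y; apply: L1Lambda_int.
split; first by move=> x; apply: phi_well_defined.
split; first by split; eexists; [exact: cG1 | exact: cL1Lam].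
split; first by move=> x; apply: sum_phi_kernel.
by split=> // y; apply: sum_phi_surj.
Qed.
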